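(* Let $(E,j)$, $(\tilde E,\tilde j)$ be soft inductive systems over the same directed set and $T_\bullet$ a uniformly bounded net of bounded linear operators $T_n:E_n\to\tilde E_n$. (1) If $T_\bullet$ maps every $j$-basic net to a $\tilde j$-convergent net, then $T_\bullet$ is $j\tilde j$-convergent. (2) $T_\bullet$ is $j\tilde j$-convergent if and only if $\lim_{n\gg m}\|(\tilde j_{nm}T_m-T_nj_{nm})x_m\|=0$ for every $x_\bullet\in C(E,j)$ (where $x_m$ is the $m$-th entry of $x_\bullet$). (3) If $T_\bullet$ is $j\tilde j$-convergent and $S_\bullet$ is a uniformly bounded $\tilde j\hat j$-convergent net of operators $S_n:\tilde E_n\to\hat E_n$ into a soft inductive system $(\hat E,\hat j)$, then $(S_nT_n)_n$ is $j\hat j$-convergent and $(ST)_\infty=S_\infty T_\infty$.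
   Context: Let $(N,\le)$ be a directed set; $\lim_{n\gg m}a_{nm}:=\lim_m\limsup_n a_{nm}$. A soft inductive system $(E,j)$: Banach spaces $E_n$, linear contractions $j_{nm}:E_m\to E_n$ ($n\ge m$), $j_{nn}=\mathrm{id}$, $j_{nm}=0$ if $n\not\ge m$, with $\lim_{n\gg m}\|(j_{nl}-j_{nm}j_{ml})x_l\|=0$ for all $l,x_l$. Nets $x_\bullet=(x_n)$, $x_n\in E_n$; seminorm $|x_\bullet|=\limsup_n\|x_n\|$. Basic nets $j_{\bullet m}x_m=(j_{nm}x_m)_n$. $C(E,j)$: seminorm closure of the basic nets in the space of uniformly bounded nets; $C_0(E,j)$: nets with $\|x_n\|\to0$; $E_\infty=C(E,j)/C_0(E,j)$. A uniformly bounded net $T_\bullet$ is $j\tilde j$-convergent if $(T_nx_n)\in C(\tilde E,\tilde j)$ for all $x_\bullet\in C(E,j)$; its limit $T_\infty:E_\infty\to\tilde E_\infty$ is defined by $T_\infty(j\text{-}\lim_nx_n)=\tilde j\text{-}\lim_nT_nx_n$. *)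

From HB Require Import structures.
From mathcomp Require Import all_boot all_order all_algebra.
From mathcomp Require Import all_classical all_reals all_analysis.
Import Order.TTheory GRing.Theory Num.Theory.
Import numFieldNormedType.Exports.

Set Implicit Arguments.
Unset Strict Implicit.
Unset Printing Implicit Defensive.

Local Open Scope ring_scope.
Local Open Scope classical_set_scope.

Section SoftInductive.
Context {R : realType} {N : Type} (le : N -> N -> Prop).

Definition directed : Prop :=
  [/\ (exists n : N, True),
      (forall n, le n n),
      (forall a b c, le a b -> le b c -> le a c) &
      (forall a b, exists c, le a c /\ le b c)].

Definition net_limsup (a : N -> \bar R) : \bar R :=
  ereal_inf (range (fun m => ereal_sup [set a n | n in le m])).

Definition enet_to0 (b : N -> \bar R) : Prop :=
  forall e : R, 0 < e -> exists m0, forall m, le m0 m -> (`|b m| <= e%:E)%E.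

Definition net_to0 (b : N -> R) : Prop :=
  forall e : R, 0 < e -> exists m0, forall m, le m0 m -> `|b m| <= e.

(* lim_{n >> m} a_{nm} = 0, i.e. lim_m limsup_n a_{nm} = 0 *)
Definition dlim0 (a : N -> N -> R) : Prop :=
  enet_to0 (fun m => net_limsup (fun n => (a n m)%:E)).

Definition soft_system {E : N -> completeNormedModType R}
  (j : forall n m, E m -> E n) : Prop :=
  [/\ (forall n m, linear (j n m)),
      (forall n m (x : E m), `|j n m x| <= `|x|),
      (forall n (x : E n), j n n x = x),
      (forall n m, ~ le m n -> forall x : E m, j n m x = 0) &
      (forall l (x : E l), dlim0 (fun n m => `|j n l x - j n m (j m l x)|))].

Definition ubounded {E : N -> completeNormedModType R} (x : forall n, E n) : Prop :=
  exists M : R, forall n, `|x n| <= M.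

(* C(E,j): seminorm closure of the basic nets j_{. m} x_m within the
   uniformly bounded nets; seminorm |x| = limsup_n ||x_n|| *)
Definition inC {E : N -> completeNormedModType R}
  (j : forall n m, E m -> E n) (x : forall n, E n) : Prop :=
  ubounded x /\
  forall e : R, 0 < e -> exists m (xm : E m),
    (net_limsup (fun n => (`|x n - j n m xm|)%:E) < e%:E)%E.

Definition inC0 {E : N -> completeNormedModType R} (x : forall n, E n) : Prop :=
  ubounded x /\ net_to0 (fun n => `|x n|).

(* the element j-lim_n x_n of E_infty = C(E,j)/C_0(E,j), as an equivalence class *)
Definition Einf_class {E : N -> completeNormedModType R}
  (j : forall n m, E m -> E n) (x : forall n, E n) : set (forall n, E n) :=
  [set y | inC j y /\ inC0 (fun n => x n - y n)].

Definition op_net {E F : N -> completeNormedModType R}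
  (T : forall n, E n -> F n) : Prop :=
  (forall n, linear (T n)) /\ exists M : R, forall n (x : E n), `|T n x| <= M * `|x|.

Definition jconv {E F : N -> completeNormedModType R}
  (j : forall n m, E m -> E n) (jt : forall n m, F m -> F n)
  (T : forall n, E n -> F n) : Prop :=
  forall x, inC j x -> inC jt (fun n => T n (x n)).

Definition Tinf {E F : N -> completeNormedModType R}
  (jt : forall n m, F m -> F n) (T : forall n, E n -> F n)
  (K : set (forall n, E n)) : set (forall n, F n) :=
  [set y | exists2 x, K x & Einf_class jt (fun n => T n (x n)) y].

End SoftInductive.

(* Two structural facts about C(E,j) carry the argument:
   - C(E,j) is closed: a bounded net approximable by nets of C(E,j) lies in it
     ([inC_of_approx]); basic nets lie in C(E,j) ([basic_inC]);
   - nets of C(E,j) are diagonally Cauchy: lim_{n>>m} |x_n - j_nm x_m| = 0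
     ([inC_diag]); this is where the softness axiom is used.
   Part (1) approximates T x by T (j_{.l} x_l); part (2) compares T_n x_n with
   jt_nm T_m x_m through T_n j_nm x_m in both directions.  Part (3) is
   algebraic: classes modulo C_0 are stable under adding C_0-nets, and C_0 is
   stable under bounded operator nets. *)

From HB Require Import structures.
From mathcomp Require Import all_boot all_order all_algebra.
From mathcomp Require Import all_classical all_reals all_analysis.
From mathcomp Require Import lra.
Import Order.TTheory GRing.Theory Num.Theory.
Import numFieldNormedType.Exports.
Local Open Scope ring_scope.
Local Open Scope classical_set_scope.

Section SoftNets.
Context {R : realType} {N : Type} (le : N -> N -> Prop).
Hypothesis hN : directed le.

Let le_trans_dir {a b c} : le a b -> le b c -> le a c.
Proof. by case: hN => _ _ H _; apply: H. Qed.

Let upper_bound a b : exists c, le a c /\ le b c.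
Proof. by case: hN => _ _ _ H; apply: H. Qed.

Definition ev_le (b : N -> R) (e : R) : Prop :=
  exists m0, forall n, le m0 n -> b n <= e.

Definition dlim0_ev (a : N -> N -> R) : Prop :=
  forall e : R, 0 < e -> exists m0, forall m, le m0 m -> ev_le (fun n => a n m) e.

Lemma ev_le_const {c e : R} : c <= e -> ev_le (fun _ => c) e.
Proof. by case: hN => -[n _] _ _ _ ce; exists n. Qed.

Lemma ev_le_combine {b1 b2 c : N -> R} {M e1 e2 e : R} :
  ev_le b1 e1 -> ev_le b2 e2 -> 0 <= M ->
  (forall n, c n <= M * b1 n + b2 n) -> M * e1 + e2 <= e -> ev_le c e.
Proof.
case=> m1 h1 [m2 h2] M0 hc he; have [m [hm1 hm2]] := upper_bound m1 m2.
exists m => n hn; apply: le_trans (hc n) (le_trans _ he).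
apply: lerD; last by apply: h2; exact: le_trans_dir hn.
by apply: ler_wpM2l => //; apply: h1; exact: le_trans_dir hn.
Qed.

Lemma ev_le_of_limsup {a : N -> R} {e : R} :
  (net_limsup le (fun n => (a n)%:E) < e%:E)%E -> ev_le a e.
Proof.
move=> /ereal_inf_lt [y [m _ <-]] hy; exists m => n hn.
have h : ((a n)%:E <= ereal_sup [set (a k)%:E | k in le m])%E.
  by apply: ereal_sup_ubound; exists n.
by rewrite -lee_fin; exact: le_trans h (ltW hy).
Qed.

Lemma limsup_le_of_ev {a : N -> R} {e : R} :
  ev_le a e -> (net_limsup le (fun n => (a n)%:E) <= e%:E)%E.
Proof.
case=> m0 h; apply: (@le_trans _ _ (ereal_sup [set (a n)%:E | n in le m0])).
  by apply: ereal_inf_lbound; exists m0.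
by apply/ereal_supP => y [n hn <-]; rewrite lee_fin; exact: h.
Qed.

Lemma limsup_ge0 (a : N -> R) : (forall n, 0 <= a n) ->
  (0 <= net_limsup le (fun n => (a n)%:E))%E.
Proof.
move=> a0; apply/ereal_infP => y [m _ <-].
apply: (@le_trans _ _ (a m)%:E); first by rewrite lee_fin.
by apply: ereal_sup_ubound; exists m => //; case: hN.
Qed.

Lemma dlim0P (a : N -> N -> R) : (forall n m, 0 <= a n m) ->
  dlim0 le a <-> dlim0_ev a.
Proof.
move=> a0; split=> h e e0.
- have e20 : 0 < e / 2 by lra.
  have [m0 hm] := h _ e20; exists m0 => m hm0.
  apply: ev_le_of_limsup; apply: le_lt_trans (lee_abs _) _.
  by apply: le_lt_trans (hm _ hm0) _; rewrite lte_fin; lra.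
- have [m0 hm] := h _ e0; exists m0 => m hm0.
  rewrite gee0_abs; first exact: limsup_le_of_ev (hm _ hm0).
  by apply: limsup_ge0 => n; exact: a0.
Qed.

Lemma linear_sub {U V : lmodType R} (f : U -> V) : linear f ->
  forall u v, f (u - v) = f u - f v.
Proof.
move=> hf u v; have := hf (-1) v u; rewrite !scaleN1r => H.
by rewrite addrC H addrC.
Qed.

Section Nets.
Context {E : N -> completeNormedModType R} {j : forall n m, E m -> E n}.

Lemma inCP (x : forall n, E n) : inC le j x <-> ubounded x /\
  forall e : R, 0 < e -> exists m (xm : E m), ev_le (fun n => `|x n - j n m xm|) e.
Proof.
split=> -[hb h]; split=> // e e0.
  by have [m [xm hm]] := h _ e0; exists m, xm; exact: ev_le_of_limsup.
have e20 : 0 < e / 2 by lra.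
have [m [xm hm]] := h _ e20; exists m, xm.
by move: (limsup_le_of_ev hm) => /le_lt_trans; apply; rewrite lte_fin; lra.
Qed.

Lemma inC_of_approx (y : forall n, E n) : ubounded y ->
  (forall e : R, 0 < e ->
     exists2 z, inC le j z & ev_le (fun n => `|y n - z n|) e) ->
  inC le j y.
Proof.
move=> hb happ; apply/inCP; split=> // e e0; have e20 : 0 < e / 2 by lra.
have [z /inCP [_ hz] hyz] := happ _ e20; have [m [zm hzm]] := hz _ e20.
exists m, zm; apply: (ev_le_combine hyz hzm ler01) => [n|]; last lra.
by rewrite mul1r; exact: ler_distD.
Qed.

Hypothesis hj : soft_system le j.

Lemma basic_inC m (xm : E m) : inC le j (fun n => j n m xm).
Proof.
case: hj => _ hjc _ _ _; apply/inCP; split; first by exists `|xm|.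
move=> e e0; exists m, xm; have [m0 _] := ev_le_const (ltW e0).
by exists m0 => n _; rewrite subrr normr0 ltW.
Qed.

Lemma inC_diag {x : forall n, E n} :
  inC le j x -> dlim0_ev (fun n m => `|x n - j n m (x m)|).
Proof.
move=> /inCP [_ hx] e e0; have e30 : 0 < e / 3 by lra.
have [l [xl [n1 hn1]]] := hx _ e30.
case: hj => hjl hjc _ _ hsoft.
have [m1 hm1] := (dlim0P _ (fun _ _ => normr_ge0 _)).1 (hsoft l xl) _ e30.
have [m0 [h1 h2]] := upper_bound n1 m1; exists m0 => m hm.
have far : `|j m l xl - x m| <= e / 3.
  by rewrite distrC; apply: hn1; exact: le_trans_dir hm.
have hfar := ev_le_const far.
have hsum := ev_le_combine (hm1 _ (le_trans_dir h2 hm)) hfar ler01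
  (fun n => lexx _) (lexx _).
apply: (ev_le_combine (ex_intro _ n1 hn1) hsum ler01) => [n|]; last lra.
rewrite mul1r /= mul1r; apply: le_trans (ler_distD (j n l xl) _ _) _.
apply: lerD => //; apply: le_trans (ler_distD (j n m (j m l xl)) _ _) _.
by apply: lerD => //; rewrite -(linear_sub _ (hjl n m)); exact: hjc.
Qed.
End Nets.

Lemma scaled_eps {M e : R} : 0 < M -> 0 < e -> exists2 d, 0 < d & M * d + d = e.
Proof.
move=> M0 e0; exists (e / (M + 1)); first by apply: divr_gt0; lra.
rewrite -[X in _ + X]mul1r -mulrDl mulrC divfK //; rewrite gt_eqF //; lra.
Qed.

Section Classes.
Context {F : N -> completeNormedModType R}.

Lemma inC0P (x : forall n, F n) : inC0 le x <->
  ubounded x /\ forall e : R, 0 < e -> ev_le (fun n => `|x n|) e.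
Proof.
split=> -[hb h]; split=> // e e0; have [m hm] := h e e0; exists m => n hn.
  by rewrite -normr_id; exact: hm.
by rewrite normr_id; exact: hm.
Qed.

Lemma inC0_zero : inC0 le (fun n => 0 : F n).
Proof.
apply/inC0P; split; first by exists 0 => n; rewrite normr0.
move=> e e0; have [m0 _] := ev_le_const (ltW e0).
by exists m0 => n _; rewrite normr0 ltW.
Qed.

Lemma inC0_add (x y : forall n, F n) :
  inC0 le x -> inC0 le y -> inC0 le (fun n => x n + y n).
Proof.
move=> /inC0P [[B1 hB1] h1] /inC0P [[B2 hB2] h2]; apply/inC0P; split.
  by exists (B1 + B2) => n; apply: le_trans (ler_normD _ _) _; exact: lerD.
move=> e e0; have e20 : 0 < e / 2 by lra.
apply: (ev_le_combine (h1 _ e20) (h2 _ e20) ler01) => [n|]; last lra.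
by rewrite mul1r; exact: ler_normD.
Qed.

Context (jt : forall n m, F m -> F n).

Lemma Einf_class_self (w : forall n, F n) :
  inC le jt w -> Einf_class le jt w w.
Proof.
move=> hw; split=> //.
have -> : (fun n => w n - w n) = (fun n => 0 : F n).
  by apply: functional_extensionality_dep => n; exact: subrr.
exact: inC0_zero.
Qed.

Lemma Einf_class_shift (w w' : forall n, F n) :
  inC0 le (fun n => w' n - w n) -> Einf_class le jt w `<=` Einf_class le jt w'.
Proof.
move=> hww y [hy hwy]; split=> //.
have -> : (fun n => w' n - y n) = (fun n => (w' n - w n) + (w n - y n)).
  by apply: functional_extensionality_dep => n; rewrite addrA subrK.
exact: inC0_add.
Qed.

End Classes.

Section OperatorNets.
Context {E F : N -> completeNormedModType R} (T : forall n, E n -> F n).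
Hypothesis hT : op_net T.

Lemma op_net_bound : exists2 M, 0 < M & forall n x, `|T n x| <= M * `|x|.
Proof.
case: hT => _ [M hM]; exists (Num.max M 0 + 1).
  by apply: (@lt_le_trans _ _ 1); [lra | rewrite lerDr le_max lexx orbT].
move=> n x; apply: le_trans (hM n x) _; apply: ler_wpM2r => //.
by apply: (@le_trans _ _ (Num.max M 0)); [rewrite le_max lexx | rewrite lerDl].
Qed.

Lemma op_net_lipschitz :
  exists2 M, 0 < M & forall n u v, `|T n u - T n v| <= M * `|u - v|.
Proof.
have [M M0 hM] := op_net_bound; exists M => // n u v.
by rewrite -(linear_sub _ (hT.1 n)); exact: hM.
Qed.

Lemma op_net_ubounded (x : forall n, E n) :
  ubounded x -> ubounded (fun n => T n (x n)).
Proof.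
case=> B hB; have [M M0 hM] := op_net_bound.
exists (M * B) => n; apply: le_trans (hM _ _) _.
by apply: ler_wpM2l => //; exact: ltW.
Qed.

Lemma inC0_op (x : forall n, E n) : inC0 le x -> inC0 le (fun n => T n (x n)).
Proof.
move=> /inC0P [hb h]; have [M M0 hM] := op_net_bound.
apply/inC0P; split; first exact: op_net_ubounded.
move=> e e0; apply: (ev_le_combine (h _ (divr_gt0 e0 M0))
  (ev_le_const (lexx 0)) (ltW M0)) => [n|].
  by rewrite addr0; exact: hM.
by rewrite addr0 mulrC divfK ?gt_eqF.
Qed.

Section Convergence.
Context (j : forall n m, E m -> E n) (jt : forall n m, F m -> F n).

(* Part (1): it suffices to test j jt-convergence on basic nets, since the
   basic nets are dense in C(E,j) and T_n is uniformly Lipschitz. *)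
Lemma jconv_of_basic :
  (forall m (xm : E m), inC le jt (fun n => T n (j n m xm))) -> jconv le j jt T.
Proof.
move=> hb x /inCP [hxb hxa]; have [M M0 hM] := op_net_lipschitz.
apply: inC_of_approx; first exact: op_net_ubounded.
move=> e e0; have [l [xl hl]] := hxa (e / M) (divr_gt0 e0 M0).
exists (fun n => T n (j n l xl)); first exact: hb.
apply: (ev_le_combine hl (ev_le_const (lexx 0)) (ltW M0)) => [n|].
  by rewrite addr0; exact: hM.
by rewrite addr0 mulrC divfK ?gt_eqF.
Qed.

Hypotheses (hj : soft_system le j) (hjt : soft_system le jt).

(* Part (2), direct implication: compare jt_nm T_m x_m and T_n j_nm x_m
   through T_n x_n, using that x and T x are diagonally Cauchy. *)
Lemma jconv_diag : jconv le j jt T -> forall x, inC le j x ->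
  dlim0 le (fun n m => `|jt n m (T m (x m)) - T n (j n m (x m))|).
Proof.
move=> hc x hx; have [M M0 hM] := op_net_lipschitz.
apply/dlim0P => [n m|e e0]; first exact: normr_ge0.
have [d d0 hd] := scaled_eps M0 e0.
have [m1 h1] := inC_diag hjt (hc x hx) _ d0.
have [m2 h2] := inC_diag hj hx _ d0.
have [m0 [hm1 hm2]] := upper_bound m1 m2; exists m0 => m hm.
apply: (ev_le_combine (h2 m (le_trans_dir hm2 hm)) (h1 m (le_trans_dir hm1 hm))
  (ltW M0)) => [n|]; last by rewrite hd.
rewrite /= [leRHS]addrC; apply: le_trans (ler_distD (T n (x n)) _ _) _.
by apply: lerD; [rewrite distrC | exact: hM].
Qed.

(* Part (2), converse: T x is approximated by the basic net jt_{.m} T_m x_m. *)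
Lemma jconv_of_diag : (forall x, inC le j x ->
    dlim0 le (fun n m => `|jt n m (T m (x m)) - T n (j n m (x m))|)) ->
  jconv le j jt T.
Proof.
move=> H x hx; have [M M0 hM] := op_net_lipschitz.
apply: inC_of_approx; first by apply: op_net_ubounded; case: hx.
move=> e e0; have [d d0 hd] := scaled_eps M0 e0.
have [m1 h1] := (dlim0P _ (fun _ _ => normr_ge0 _)).1 (H x hx) _ d0.
have [m2 h2] := inC_diag hj hx _ d0.
have [m [hm1 hm2]] := upper_bound m1 m2.
exists (fun n => jt n m (T m (x m))); first exact: basic_inC.
apply: (ev_le_combine (h2 m hm2) (h1 m hm1) (ltW M0)) => [n|]; last by rewrite hd.
apply: le_trans (ler_distD (T n (j n m (x m))) _ _) _.
by apply: lerD; [exact: hM | rewrite distrC].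
Qed.

End Convergence.
End OperatorNets.

(* Part (3): the limit of a product is the product of the limits, on any set
   of C(E,j)-nets, in particular on an E_infty-class. *)
Lemma Tinf_comp {E F G : N -> completeNormedModType R}
  (j : forall n m, E m -> E n) (jt : forall n m, F m -> F n)
  (jh : forall n m, G m -> G n)
  (T : forall n, E n -> F n) (S : forall n, F n -> G n)
  (K : set (forall n, E n)) :
  op_net S -> jconv le j jt T -> K `<=` inC le j ->
  Tinf le jh (fun n x => S n (T n x)) K = Tinf le jh S (Tinf le jt T K).
Proof.
move=> hS hT hK; apply/seteqP; split=> y /=.
  case=> x Kx hy; exists (fun n => T n (x n)) => //.
  by exists x => //; apply: Einf_class_self; exact/hT/hK.
case=> z [x Kx [_ hz]] hy; exists x => //; apply: Einf_class_shift hy.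
have -> : (fun n => S n (T n (x n)) - S n (z n))
        = (fun n => S n (T n (x n) - z n)).
  by apply: functional_extensionality_dep => n; rewrite (linear_sub _ (hS.1 n)).
exact: inC0_op.
Qed.

End SoftNets.

Theorem mainTheorem9 (R : realType) (N : Type) (le : N -> N -> Prop)
  (hN : directed le)
  (E Et Eh : N -> completeNormedModType R)
  (j : forall n m, E m -> E n) (jt : forall n m, Et m -> Et n)
  (jh : forall n m, Eh m -> Eh n)
  (hj : soft_system le j) (hjt : soft_system le jt) (hjh : soft_system le jh)
  (T : forall n, E n -> Et n) (hT : op_net T) :
  [/\ ((forall m (xm : E m), inC le jt (fun n => T n (j n m xm))) ->
         jconv le j jt T),
      (jconv le j jt T <->
         forall x, inC le j x ->
           dlim0 le (fun n m => `|jt n m (T m (x m)) - T n (j n m (x m))|)) &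
      (forall S : forall n, Et n -> Eh n, op_net S ->
         jconv le j jt T -> jconv le jt jh S ->
         jconv le j jh (fun n x => S n (T n x)) /\
         forall x, inC le j x ->
           Tinf le jh (fun n x => S n (T n x)) (Einf_class le j x)
           = Tinf le jh S (Tinf le jt T (Einf_class le j x)))].
Proof.
split.
- exact: jconv_of_basic.
- by split; [exact: jconv_diag | exact: jconv_of_diag].
- move=> S hS hTc hSc; split; first by move=> x /hTc /hSc.
  by move=> x _; apply: (Tinf_comp _ _ j jt) => // y [].
Qed.
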